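(* Let $D$ be a BN distribution on $\{0,1\}^n$ with all conditional probabilities in $(0,1)$ and BN-induced basis $\{\phi_S\}$, let $f:\{0,1\}^n\to\{-1,1\}$, $\epsilon\in(0,1]$, $T\ge1$, and suppose there is $g=\sum_{S\in\mathcal{T}}g_S\phi_S$ with $|\mathcal{T}|=T$ and $\mathbb{E}_D[(f-g)^2]\le\epsilon$. Let $\mathcal{S}=\{S:|\hat f_S|\ge\sqrt{\epsilon/T}\}$ (so $|\mathcal{S}|\le T/\epsilon$). Let $\mathcal{S}^*\supseteq\mathcal{S}$ with $|\mathcal{S}^*|\le4T/\epsilon$, and let $\tilde f_S$ ($S\in\mathcal{S}^*$) be numbers with $|\tilde f_S-\hat f_S|\le\gamma$ where $\gamma\le\epsilon^2/(4T)$. Define $h_1=\sum_{S\in\mathcal{S}}\hat f_S\phi_S$, $h_2=\sum_{S\in\mathcal{S}}\tilde f_S\phi_S$, $h_3=\sum_{S\in\mathcal{S}^*}\tilde f_S\phi_S$. Then $\mathbb{E}_D[(f-h_1)^2]\le2\epsilon$, $\mathbb{E}_D[(f-h_2)^2]\le3\epsilon$, and $$P_D[f(X)\neq\operatorname{sign}(h_3(X))]\le\mathbb{E}_D[(f-h_3)^2]\le3\epsilon.$$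
   Context: For a BN with parent sets $\operatorname{pa}(v)$, $\mu_{v,x_{\operatorname{pa}(v)}}=P(X_v=1\mid X_{\operatorname{pa}(v)}=x_{\operatorname{pa}(v)})$, $\sigma_{v,x_{\operatorname{pa}(v)}}=\sqrt{\mu_{v,x_{\operatorname{pa}(v)}}(1-\mu_{v,x_{\operatorname{pa}(v)}})}$, the BN-induced basis is $\phi_v(x)=(x_v-\mu_{v,x_{\operatorname{pa}(v)}})/\sigma_{v,x_{\operatorname{pa}(v)}}$, $\phi_S=\prod_{v\in S}\phi_v$; $\hat f_S=\mathbb{E}_D[f(X)\phi_S(X)]$. *)

From HB Require Import structures.
From mathcomp Require Import all_boot all_order all_algebra.
Set Implicit Arguments. Unset Strict Implicit. Unset Printing Implicit Defensive.
Import Order.TTheory GRing.Theory Num.Theory.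
Local Open Scope ring_scope.

Definition cube (n : nat) := {ffun 'I_n -> bool}.

(* A Bayesian network on {0,1}^n: parent sets pa, acyclic (there is a rank
   function strictly increasing along every edge u -> v), and conditional
   probability parameters mu v x = P(X_v = 1 | X_pa(v) = x_pa(v)), which may
   only depend on the parent coordinates of x. *)
Definition dag_parents (n : nat) (pa : 'I_n -> {set 'I_n}) : Prop :=
  exists r : 'I_n -> nat, forall u v, u \in pa v -> (r u < r v)%N.

Definition cpt_local (R : rcfType) (n : nat) (pa : 'I_n -> {set 'I_n})
  (mu : 'I_n -> cube n -> R) : Prop :=
  forall v (x y : cube n), (forall u, u \in pa v -> x u = y u) -> mu v x = mu v y.

Definition cpt_interior (R : rcfType) (n : nat) (mu : 'I_n -> cube n -> R) : Prop :=
  forall v x, 0 < mu v x < 1.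

Definition bn_dist (R : rcfType) (n : nat) (mu : 'I_n -> cube n -> R) (x : cube n) : R :=
  \prod_(v < n) (if x v then mu v x else 1 - mu v x).

Definition expect (R : rcfType) (n : nat) (mu : 'I_n -> cube n -> R) (F : cube n -> R) : R :=
  \sum_(x : cube n) bn_dist mu x * F x.

Definition prob (R : rcfType) (n : nat) (mu : 'I_n -> cube n -> R) (P : pred (cube n)) : R :=
  \sum_(x : cube n | P x) bn_dist mu x.

Definition bn_sigma (R : rcfType) (n : nat) (mu : 'I_n -> cube n -> R) v x : R :=
  Num.sqrt (mu v x * (1 - mu v x)).

Definition phi1 (R : rcfType) (n : nat) (mu : 'I_n -> cube n -> R) v (x : cube n) : R :=
  ((x v)%:R - mu v x) / bn_sigma mu v x.

Definition phiS (R : rcfType) (n : nat) (mu : 'I_n -> cube n -> R) (S : {set 'I_n})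
  (x : cube n) : R := \prod_(v in S) phi1 mu v x.

Definition fourier (R : rcfType) (n : nat) (mu : 'I_n -> cube n -> R)
  (f : cube n -> R) (S : {set 'I_n}) : R :=
  expect mu (fun x => f x * phiS mu S x).

Definition expand (R : rcfType) (n : nat) (mu : 'I_n -> cube n -> R)
  (A : {set {set 'I_n}}) (c : {set 'I_n} -> R) (x : cube n) : R :=
  \sum_(S in A) c S * phiS mu S x.

Definition sqerr (R : rcfType) (n : nat) (mu : 'I_n -> cube n -> R)
  (f h : cube n -> R) : R := expect mu (fun x => (f x - h x) ^+ 2).

From HB Require Import structures.
From mathcomp Require Import all_boot all_order all_algebra.
From mathcomp Require Import ring lra.
Set Implicit Arguments. Unset Strict Implicit. Unset Printing Implicit Defensive.
Import Order.TTheory GRing.Theory Num.Theory.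
Local Open Scope ring_scope.

(* Orthonormality of the BN basis is proved by summing out one coordinate at a time, always a
   sink of the remaining variables: flipping a sink changes neither the other factors of the joint
   probability nor the other basis functions, and a single [phi_v] has conditional mean 0 and
   variance 1.  Orthonormality gives Parseval,
     E[(f - sum_A c_S phi_S)^2] = E[f^2] - sum_A fhat_S^2 + sum_A (c_S - fhat_S)^2,
   so every claim is bookkeeping of Fourier weight: the heavy coefficients miss at most the weight
   missed by a [T]-sparse [eps]-approximation plus its [T] light coefficients, of weight [<= eps/T]
   each; estimating at most [4T/eps] coefficients within [eps^2/(4T)] costs at most [eps]; and
   [1{f <> sgn h} <= (f - h)^2] pointwise for [f = +-1]. *)

Lemma prod_setD1 (T : finType) (R : comRingType) (F : T -> R) (K : {set T}) v :
  \prod_(u in K) F u = (if v \in K then F v else 1) * \prod_(u in K :\ v) F u.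
Proof.
case: ifP => vK; first by rewrite (big_setD1 v).
by rewrite mul1r; apply: eq_bigl => u; rewrite in_setD1; case: eqP => // ->.
Qed.

Lemma eq_setD1E (T : finType) (A B : {set T}) v :
  (A == B) = ((v \in A) == (v \in B)) && (A :\ v == B :\ v).
Proof.
apply/eqP/andP => [-> | [/eqP ABv /eqP AB]]; first by rewrite !eqxx.
apply/setP => u; have [->//|uv] := eqVneq u v.
by move/setP: AB => /(_ u); rewrite !in_setD1 uv.
Qed.

Section BNBasis.
Variables (R : rcfType) (n : nat) (pa : 'I_n -> {set 'I_n}) (mu : 'I_n -> cube n -> R).
Hypothesis pa_dag : dag_parents pa.
Hypothesis mu_local : cpt_local pa mu.
Hypothesis mu_interior : cpt_interior mu.

Definition cond_prob v (x : cube n) : R := if x v then mu v x else 1 - mu v x.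

Definition bn_weight (K : {set 'I_n}) x := \prod_(v in K) cond_prob v x.

Definition flip v (x : cube n) : cube n := [ffun u => if u == v then ~~ x v else x u].

Lemma flip_eq v x : flip v x v = ~~ x v.
Proof. by rewrite ffunE eqxx. Qed.

Lemma flip_neq v x u : u != v -> flip v x u = x u.
Proof. by rewrite ffunE => /negbTE ->. Qed.

Lemma flipK v : involutive (flip v).
Proof.
move=> x; apply/ffunP => u; rewrite !ffunE.
by case: eqP => [->|//]; rewrite eqxx negbK.
Qed.

Lemma mu_flip v u x : v \notin pa u -> mu u (flip v x) = mu u x.
Proof.
move=> vNpa; apply: mu_local => w wpa; apply: flip_neq.
by apply: contraNneq vNpa => <-.
Qed.

Lemma cond_prob_flip v u x : u != v -> v \notin pa u ->
  cond_prob u (flip v x) = cond_prob u x.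
Proof. by move=> uv vNpa; rewrite /cond_prob mu_flip // flip_neq. Qed.

Lemma phi1_flip v u x : u != v -> v \notin pa u ->
  phi1 mu u (flip v x) = phi1 mu u x.
Proof. by move=> uv vNpa; rewrite /phi1 /bn_sigma mu_flip // flip_neq. Qed.

Definition phi1_if (b : bool) v x : R := if b then phi1 mu v x else 1.

(* [phi1 v] has mean [0] and variance [1] under the conditional law of [x v]. *)
Lemma cond_prob_phi1_flip v x (bS bT : bool) : v \notin pa v ->
  let c y := cond_prob v y * (phi1_if bS v y * phi1_if bT v y) in
  c x + c (flip v x) = (bS == bT)%:R.
Proof.
move=> vNpa c; rewrite {}/c /cond_prob /phi1_if /phi1 /bn_sigma mu_flip // flip_eq.
have /andP [m0 m1] := mu_interior v x.
set m := mu v x; set s := Num.sqrt _.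
have var_pos : 0 < m * (1 - m) by rewrite mulr_gt0 // subr_gt0.
have s2 : s ^+ 2 = m * (1 - m) by rewrite sqr_sqrtr // ltW.
have s0 : s != 0 by rewrite sqrtr_eq0 -ltNge.
have var1 : m * (1 - m) / s ^+ 2 = 1 by rewrite s2 divff // gt_eqF.
case: bS; case: bT => /=.
- by rewrite -[RHS]var1; case: (x v) => /=; field.
- by case: (x v) => /=; field.
- by case: (x v) => /=; field.
- by case: (x v) => /=; ring.
Qed.

Lemma phiS_setD1 (S : {set 'I_n}) v x : phiS mu S x = phi1_if (v \in S) v x * phiS mu (S :\ v) x.
Proof. exact: prod_setD1. Qed.

Lemma bn_weight_phiS_setD1 (K S T : {set 'I_n}) v x : v \in K ->
  bn_weight K x * (phiS mu S x * phiS mu T x) =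
  cond_prob v x * (phi1_if (v \in S) v x * phi1_if (v \in T) v x) *
  (bn_weight (K :\ v) x * (phiS mu (S :\ v) x * phiS mu (T :\ v) x)).
Proof.
move=> vK; rewrite /bn_weight (prod_setD1 _ K v) vK (phiS_setD1 S v) (phiS_setD1 T v).
ring.
Qed.

Definition sink_in (K : {set 'I_n}) v := forall u, u \in K -> v \notin pa u.

Lemma bn_weight_phiS_flip_sink (K S T : {set 'I_n}) v x : sink_in K v -> S \subset K -> T \subset K ->
  bn_weight (K :\ v) (flip v x) * (phiS mu (S :\ v) (flip v x) * phiS mu (T :\ v) (flip v x)) =
  bn_weight (K :\ v) x * (phiS mu (S :\ v) x * phiS mu (T :\ v) x).
Proof.
move=> sink /subsetP SK /subsetP TK.
have phiS_flip (A : {set 'I_n}) : {subset A <= K} -> phiS mu (A :\ v) (flip v x) = phiS mu (A :\ v) x.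
  move=> AK; apply: eq_bigr => u /setD1P [uv uA]; exact: phi1_flip (sink _ (AK _ uA)).
rewrite !phiS_flip //; congr (_ * _).
by apply: eq_bigr => u /setD1P [uv uK]; exact: cond_prob_flip (sink _ uK).
Qed.

Lemma bn_weight_phiS_flip_pair (K S T : {set 'I_n}) v x :
  v \in K -> sink_in K v -> S \subset K -> T \subset K ->
  let H y := bn_weight K y * (phiS mu S y * phiS mu T y) in
  H x + H (flip v x) = ((v \in S) == (v \in T))%:R *
    (bn_weight (K :\ v) x * (phiS mu (S :\ v) x * phiS mu (T :\ v) x)).
Proof.
move=> vK sink SK TK H; rewrite {}/H !(bn_weight_phiS_setD1 _ _ _ vK).
by rewrite bn_weight_phiS_flip_sink // -mulrDl cond_prob_phi1_flip // sink.
Qed.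

Lemma exists_sink (K : {set 'I_n}) : K != set0 -> exists2 v, v \in K & sink_in K v.
Proof.
have [r r_pa] := pa_dag; rewrite -card_gt0 => K_gt0.
have [v vK v_max] := eq_bigmax_cond r K_gt0.
exists v => // u uK; apply/negP => /r_pa; apply/negP; rewrite -leqNgt -v_max.
exact: leq_bigmax_cond.
Qed.

(* The coordinates outside [K] are not weighted: they contribute the factor [2 ^ (n - #|K|)]. *)
Lemma sum_bn_weight_phiS (K S T : {set 'I_n}) : S \subset K -> T \subset K ->
  \sum_x bn_weight K x * (phiS mu S x * phiS mu T x) = (2 ^ (n - #|K|))%:R * (S == T)%:R.
Proof.
move cardK : #|K| => k; elim: k K cardK S T => [|k IH] K cardK S T SK TK.
  move: SK TK; rewrite (cards0_eq cardK) !subset0 => /eqP-> /eqP->.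
  rewrite /bn_weight /phiS; under eq_bigr do rewrite !big_set0 !mulr1.
  by rewrite sumr_const card_ffun card_bool card_ord subn0 eqxx mulr1.
have [v vK sink] : exists2 v, v \in K & sink_in K v.
  by apply: exists_sink; rewrite -card_gt0 cardK.
have cardKv : #|K :\ v| = k by move: cardK; rewrite (cardsD1 v) vK add1n => -[].
have k_lt_n : (k < n)%N by rewrite -cardK -[X in (_ <= X)%N](card_ord n) max_card.
set H := fun x => bn_weight K x * (phiS mu S x * phiS mu T x).
have sum_flip : \sum_x H (flip v x) = \sum_x H x.
  by rewrite [RHS](reindex_inj (inv_inj (flipK v))).
have two_sum : 2 * \sum_x H x = ((v \in S) == (v \in T))%:R *
    ((2 ^ (n - k))%:R * (S :\ v == T :\ v)%:R).
  rewrite mulr_natl mulr2n -{2}sum_flip -big_split -(IH _ cardKv) ?setSD //=.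
  by rewrite mulr_sumr; apply: eq_bigr => x _; apply: bn_weight_phiS_flip_pair.
apply: (@mulfI _ 2); first by rewrite pnatr_eq0.
rewrite two_sum (eq_setD1E S T v) -(subnSK k_lt_n) expnS natrM.
by case: (_ == _); case: (_ == _); rewrite /= ?mulr0 ?mul0r ?mulr1 ?mul1r.
Qed.

Lemma phiS_orthonormal S T : expect mu (fun x => phiS mu S x * phiS mu T x) = (S == T)%:R.
Proof.
have := sum_bn_weight_phiS (subsetT S) (subsetT T).
rewrite cardsT card_ord subnn mul1r => <-.
by apply: eq_bigr => x _; congr (_ * _); apply: eq_bigl => u; rewrite inE.
Qed.

Lemma bn_dist_ge0 x : 0 <= bn_dist mu x.
Proof.
apply: prodr_ge0 => v _; have /andP [m0 m1] := mu_interior v x.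
by case: (x v); rewrite ?subr_ge0 ltW.
Qed.

Lemma expect_ge0 F : (forall x, 0 <= F x) -> 0 <= expect mu F.
Proof. by move=> F_ge0; apply: sumr_ge0 => x _; rewrite mulr_ge0 ?bn_dist_ge0. Qed.

Lemma expect1 : expect mu (fun=> 1) = 1.
Proof.
transitivity (expect mu (fun x => phiS mu set0 x * phiS mu set0 x)).
  by apply: eq_bigr => x _; rewrite /phiS big_set0 !mulr1.
by rewrite phiS_orthonormal eqxx.
Qed.

Lemma expectZ a F : expect mu (fun x => a * F x) = a * expect mu F.
Proof. by rewrite /expect mulr_sumr; apply: eq_bigr => x _; rewrite mulrCA. Qed.

Lemma expect_sum (A : {set {set 'I_n}}) F :
  expect mu (fun x => \sum_(S in A) F S x) = \sum_(S in A) expect mu (F S).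
Proof. by rewrite /expect exchange_big; apply: eq_bigr => x _; rewrite mulr_sumr. Qed.

Lemma expect_expand_mul F (A : {set {set 'I_n}}) c :
  expect mu (fun x => expand mu A c x * F x) = \sum_(S in A) c S * fourier mu F S.
Proof.
under [RHS]eq_bigr do rewrite /fourier -expectZ.
rewrite -expect_sum; apply: eq_bigr => x _; congr (_ * _).
by rewrite /expand mulr_suml; apply: eq_bigr => S _; rewrite -mulrA [_ * F x]mulrC.
Qed.

Lemma fourier_expand (A : {set {set 'I_n}}) c S : S \in A -> fourier mu (expand mu A c) S = c S.
Proof.
move=> SA; rewrite /fourier expect_expand_mul (bigD1 S) //= big1 => [|T /andP [_ TS]].
  by rewrite /fourier phiS_orthonormal eqxx mulr1 addr0.
by rewrite /fourier phiS_orthonormal eq_sym (negbTE TS) mulr0.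
Qed.

Definition fourier_weight f (A : {set {set 'I_n}}) := \sum_(S in A) fourier mu f S ^+ 2.

Lemma sqerr_expand f (A : {set {set 'I_n}}) c :
  sqerr mu f (expand mu A c) = expect mu (fun x => f x ^+ 2) - fourier_weight f A +
    \sum_(S in A) (c S - fourier mu f S) ^+ 2.
Proof.
set h := expand mu A c.
have -> : sqerr mu f h = expect mu (fun x => f x ^+ 2) -
    2 * expect mu (fun x => h x * f x) + expect mu (fun x => h x * h x).
  rewrite /sqerr /expect mulr_sumr -sumrB -big_split /=.
  by apply: eq_bigr => x _; ring.
rewrite !expect_expand_mul.
have -> : \sum_(S in A) c S * fourier mu h S = \sum_(S in A) c S * c S.
  by apply: eq_bigr => S SA; rewrite fourier_expand.
rewrite /fourier_weight -!addrA; congr (_ + _).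
by rewrite mulr_sumr -!sumrN -!big_split /=; apply: eq_bigr => S _; ring.
Qed.

Lemma sqerr_ge0 f h : 0 <= sqerr mu f h.
Proof. by apply: expect_ge0 => x; rewrite sqr_ge0. Qed.

Lemma sqerr_expand_fourier f (A : {set {set 'I_n}}) :
  sqerr mu f (expand mu A (fourier mu f)) = expect mu (fun x => f x ^+ 2) - fourier_weight f A.
Proof. by rewrite sqerr_expand big1 ?addr0 // => S _; rewrite subrr expr0n. Qed.

Lemma sqerr_expand_perturb f (A : {set {set 'I_n}}) c :
  sqerr mu f (expand mu A c) =
  sqerr mu f (expand mu A (fourier mu f)) + \sum_(S in A) (c S - fourier mu f S) ^+ 2.
Proof. by rewrite sqerr_expand sqerr_expand_fourier. Qed.

Lemma bessel f (A : {set {set 'I_n}}) : fourier_weight f A <= expect mu (fun x => f x ^+ 2).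
Proof. by rewrite -subr_ge0 -sqerr_expand_fourier sqerr_ge0. Qed.

Lemma fourier_weight_subset f (A B : {set {set 'I_n}}) :
  A \subset B -> fourier_weight f A <= fourier_weight f B.
Proof.
move=> AB; rewrite /fourier_weight [X in _ <= X](big_setID A) /= (setIidPr AB) lerDl.
by apply: sumr_ge0 => S _; rewrite sqr_ge0.
Qed.

Lemma expect_sqr_sign f : (forall x, f x = 1 \/ f x = -1) -> expect mu (fun x => f x ^+ 2) = 1.
Proof.
move=> f_sign; rewrite -expect1; apply: eq_bigr => x _.
by case: (f_sign x) => ->; rewrite ?sqrrN expr1n.
Qed.

Definition heavy_coeffs f a := [set S : {set 'I_n} | Num.sqrt a <= `|fourier mu f S|].

Lemma mem_heavy_coeffs f a S : 0 <= a -> (S \in heavy_coeffs f a) = (a <= fourier mu f S ^+ 2).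
Proof. by move=> a_ge0; rewrite inE -sqrtr_sqr ler_sqrt // sqr_ge0. Qed.

Lemma card_heavy_coeffs f a : 0 < a ->
  #|heavy_coeffs f a|%:R * a <= expect mu (fun x => f x ^+ 2).
Proof.
move=> a_gt0; apply: le_trans (bessel f _); rewrite mulr_natl -sumr_const.
by apply: ler_sum => S; rewrite mem_heavy_coeffs // ltW.
Qed.

(* The light coefficients of [A] carry Fourier weight at most [#|A| * a]. *)
Lemma sqerr_heavy_coeffs f a (A : {set {set 'I_n}}) c e : 0 <= a ->
  sqerr mu f (expand mu A c) <= e ->
  sqerr mu f (expand mu (heavy_coeffs f a) (fourier mu f)) <= e + #|A|%:R * a.
Proof.
move=> a_ge0 errA; rewrite sqerr_expand_fourier.
set H := heavy_coeffs f a.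
have approx : expect mu (fun x => f x ^+ 2) - fourier_weight f A <= e.
  apply: le_trans errA; rewrite sqerr_expand lerDl.
  by apply: sumr_ge0 => S _; rewrite sqr_ge0.
have heavy_part : fourier_weight f (A :&: H) <= fourier_weight f H.
  exact/fourier_weight_subset/subsetIr.
have light_part : fourier_weight f (A :\: H) <= #|A|%:R * a.
  apply: le_trans (_ : #|A :\: H|%:R * a <= _); last first.
    by rewrite ler_wpM2r // ler_nat subset_leq_card // subsetDl.
  rewrite mulr_natl -sumr_const; apply: ler_sum => S /setDP [_ SNH].
  by move: SNH; rewrite mem_heavy_coeffs // -ltNge => /ltW.
have split_weight : fourier_weight f A = fourier_weight f (A :&: H) + fourier_weight f (A :\: H).
  exact: big_setID.
lra.
Qed.

End BNBasis.

Lemma sum_sqr_le_card (R : realDomainType) (I : finType) (A : {set I}) (d : I -> R) b :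
  (forall i, i \in A -> `|d i| <= b) -> \sum_(i in A) d i ^+ 2 <= #|A|%:R * b ^+ 2.
Proof.
move=> d_le; rewrite mulr_natl -sumr_const; apply: ler_sum => i iA.
have d_le_b := d_le i iA.
by rewrite -real_normK ?num_real // ler_sqr ?nnegrE // (le_trans _ d_le_b).
Qed.

Lemma sign_mismatch_le_sqr (R : realDomainType) (y z : R) : (y = 1 \/ y = -1) ->
  (y != Num.sg z)%:R <= (y - z) ^+ 2.
Proof.
case=> ->.
- have [z_gt0|z_le0] := ltrP 0 z; first by rewrite gtr0_sg // eqxx sqr_ge0.
  by apply: le_trans (_ : 1 <= _); [case: (_ != _) | nra].
- have [z_lt0|z_ge0] := ltrP z 0; first by rewrite ltr0_sg // eqxx sqr_ge0.
  by apply: le_trans (_ : 1 <= _); [case: (_ != _) | nra].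
Qed.

Lemma prob_sign_le_sqerr (R : rcfType) n (mu : 'I_n -> cube n -> R) (f h : cube n -> R) :
  cpt_interior mu -> (forall x, f x = 1 \/ f x = -1) ->
  prob mu (fun x => f x != Num.sg (h x)) <= sqerr mu f h.
Proof.
move=> mu_interior f_sign; rewrite /prob big_mkcond; apply: ler_sum => x _.
rewrite -[X in if _ then X else _]mulr1 -[X in if _ then _ else X](mulr0 (bn_dist mu x)).
rewrite -fun_if ler_wpM2l ?bn_dist_ge0 //.
by case: ifP (sign_mismatch_le_sqr (h x) (f_sign x)) => _ /=.
Qed.

(* With [gamma = eps ^ 2 / (4 T)] and at most [4 T / eps] estimated coefficients, the estimation error is [<= eps ^ 3 / (4 T) <= eps]. *)
Lemma coeff_error_budget (R : realFieldType) (eps T k : R) :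
  0 < eps <= 1 -> 1 <= T -> k <= 4 * T / eps -> k * (eps ^+ 2 / (4 * T)) ^+ 2 <= eps.
Proof.
move=> /andP [eps_gt0 eps_le1] T_ge1 k_le.
apply: le_trans (_ : 4 * T / eps * (eps ^+ 2 / (4 * T)) ^+ 2 <= eps).
  by rewrite ler_wpM2r // sqr_ge0.
have -> : 4 * T / eps * (eps ^+ 2 / (4 * T)) ^+ 2 = eps ^+ 3 / (4 * T).
  by field; rewrite ?gt_eqF //; lra.
rewrite ler_pdivrMr; nra.
Qed.

Theorem mainTheorem16 (R : rcfType) (n : nat)
  (pa : 'I_n -> {set 'I_n}) (mu : 'I_n -> cube n -> R)
  (f : cube n -> R) (eps : R) (T : nat)
  (Tset : {set {set 'I_n}}) (g : {set 'I_n} -> R)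
  (Sstar : {set {set 'I_n}}) (ft : {set 'I_n} -> R) (gamma : R) :
  dag_parents pa -> cpt_local pa mu -> cpt_interior mu ->
  (forall x, f x = 1 \/ f x = -1) ->
  0 < eps <= 1 -> (1 <= T)%N ->
  #|Tset| = T ->
  sqerr mu f (expand mu Tset g) <= eps ->
  let Sset := [set S : {set 'I_n} | Num.sqrt (eps / T%:R) <= `|fourier mu f S|] in
  Sset \subset Sstar ->
  #|Sstar|%:R <= 4 * T%:R / eps ->
  (forall S, S \in Sstar -> `|ft S - fourier mu f S| <= gamma) ->
  gamma <= eps ^+ 2 / (4 * T%:R) ->
  let h1 := expand mu Sset (fourier mu f) in
  let h2 := expand mu Sset ft in
  let h3 := expand mu Sstar ft in
  [/\ #|Sset|%:R <= T%:R / eps,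
      sqerr mu f h1 <= 2 * eps,
      sqerr mu f h2 <= 3 * eps,
      prob mu (fun x => f x != Num.sg (h3 x)) <= sqerr mu f h3
    & sqerr mu f h3 <= 3 * eps].
Proof.
move=> dag local interior f_sign eps_bnd T_ge1 cardT errT Sset Sset_sub card_Sstar ft_err
  gamma_le h1 h2 h3.
have [eps_gt0 eps_le1] := andP eps_bnd.
have Ef2 := expect_sqr_sign dag local interior f_sign.
have T_gt0 : 0 < T%:R :> R by rewrite ltr0n.
have a_gt0 : 0 < eps / T%:R by rewrite divr_gt0.
have card_Sset : #|Sset|%:R <= T%:R / eps.
  have := card_heavy_coeffs dag local interior f a_gt0.
  by rewrite Ef2 mulrA ler_pdivrMr // mul1r ler_pdivlMr.
have err_h1 : sqerr mu f h1 <= 2 * eps.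
  have := sqerr_heavy_coeffs dag local interior (ltW a_gt0) errT.
  rewrite cardT mulrCA divff ?gt_eqF // mulr1 => err.
  by apply: le_trans err _; lra.
have coeff_err (A : {set {set 'I_n}}) : A \subset Sstar -> #|A|%:R <= 4 * T%:R / eps ->
    \sum_(S in A) (ft S - fourier mu f S) ^+ 2 <= eps.
  move=> /subsetP A_sub card_A; apply: le_trans (coeff_error_budget _ _ card_A) => //.
    by apply: sum_sqr_le_card => S SA; apply: le_trans (ft_err S (A_sub S SA)) gamma_le.
  by rewrite ler1n.
have card_Sset4 : #|Sset|%:R <= 4 * T%:R / eps.
  by apply: le_trans card_Sset _; rewrite ler_wpM2r ?invr_ge0 ?ltW //; lra.
have perturb := sqerr_expand_perturb dag local interior f.
have weight_err := sqerr_expand_fourier dag local interior f.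
split => //.
- rewrite /h2 perturb; have := coeff_err _ Sset_sub card_Sset4.
  by move: err_h1; rewrite /h1; lra.
- exact: prob_sign_le_sqerr.
- rewrite /h3 perturb !weight_err; have := coeff_err _ (subxx _) card_Sstar.
  have := fourier_weight_subset mu f Sset_sub.
  by move: err_h1; rewrite /h1 weight_err; lra.
Qed.
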